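(* Let $a\ge b\ge2$ be integers with $a/b\in\mathbb Z$, $\beta>1$ the positive root of $\beta^2=a\beta+b$, $\beta'=a-\beta$, and $\mathcal A=\{0,\dots,b-1\}$. For $n\ge1$ let $\mu_n=\min_{j\in\{0,1,\dots,b^n-1\}}P_{\mathrm{Pref}_{2n}(\mathbf h(j))}(\beta')$, and define sets $J_n\subseteq\mathbb Z$ by $J_0=\{0\}$ and \[ J_n=\Big\{j\in J_{n-1}+b^{n-1}\mathcal A:\ P_{\mathrm{Pref}_{2n}(\mathbf h(j))}(\beta')<\mu_n+|\beta'|^{2n+1}\tfrac{b-1}{1-(\beta')^2}\Big\}\quad(n\ge1). \] Then the sequence $(\mu_n)_{n\ge1}$ is non-increasing, and for every $n\ge1$, \[ \mu_n=\min_{j\in J_{n-1}+b^{n-1}\mathcal A}P_{\mathrm{Pref}_{2n}(\mathbf h(j))}(\beta'). \]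
   Context: For an algebraic integer $\beta$, the $\beta$-adic expansion of $x\in\mathbb Z[\beta]$ is the unique infinite word $\mathbf h(x)=u_0u_1u_2\cdots$ with $u_n\in\{0,1,\dots,|N(\beta)|-1\}$ such that $x-\sum_{i=0}^{n-1}u_i\beta^i\in\beta^n\mathbb Z[\beta]$ for all $n\in\mathbb N$; here $|N(\beta)|=b$. $\mathrm{Pref}_n(\mathbf u)$ is the prefix of length $n$ of $\mathbf u$; for a finite word $w=w_0\cdots w_{k-1}$, $P_w(X)=\sum_{i=0}^{k-1}w_iX^i$. $J+b^{n-1}\mathcal A=\{j+b^{n-1}d: j\in J, d\in\mathcal A\}$. *)

From HB Require Import structures.
From mathcomp Require Import all_boot all_order all_algebra.
Set Implicit Arguments. Unset Strict Implicit. Unset Printing Implicit Defensive.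
Import Order.TTheory GRing.Theory Num.Theory.
Local Open Scope ring_scope.

Section Defs.
Variable R : realFieldType.

(* x \in Z[beta] (beta a root of X^2 - aX - b, so Z[beta] = Z + Z beta) *)
Definition inZbeta (beta x : R) : Prop :=
  exists p q : int, x = p%:~R + q%:~R * beta.

Definition is_beta_expansion (b : nat) (beta x : R) (u : nat -> nat) : Prop :=
  (forall i, (u i < b)%N) /\
  forall n : nat, exists y : R, inZbeta beta y /\
    x - \sum_(i < n) (u i)%:R * beta ^+ i = beta ^+ n * y.

Definition Ppref (u : nat -> nat) (k : nat) (x : R) : R :=
  \sum_(i < k) (u i)%:R * x ^+ i.

Definition seqmin (s : seq int) (f : int -> R) : R :=
  foldr (fun j m => Num.min (f j) m) (f (head 0 s)) s.

Definition mu (b : nat) (h : int -> nat -> nat) (beta' : R) (n : nat) : R :=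
  seqmin [seq (k%:Z) | k <- iota 0 (b ^ n)%N]
         (fun j => Ppref (h j) (2 * n)%N beta').

Definition cands (b : nat) (J : seq int) (n : nat) : seq int :=
  [seq j + ((b ^ n) * d)%N%:Z | j <- J, d <- iota 0 b].

Fixpoint Jset (b : nat) (h : int -> nat -> nat) (beta' : R) (n : nat) : seq int :=
  match n with
  | 0 => [:: 0]
  | n'.+1 =>
      [seq j <- cands b (Jset b h beta' n') n' |
         Ppref (h j) (2 * n)%N beta' <
         mu b h beta' n + `|beta'| ^+ (2 * n).+1 * (b - 1)%N%:R / (1 - beta' ^+ 2)]
  end.

End Defs.

From HB Require Import structures.
From mathcomp Require Import all_boot all_order all_algebra.
From mathcomp Require Import ring lra zify.
Import Order.TTheory GRing.Theory Num.Theory.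
Set Implicit Arguments. Unset Strict Implicit.
Local Open Scope ring_scope.

(* Since [b | a], we have [b = beta^2 eps] with [eps] in Z[beta]
   congruent to 1 modulo [beta].  Hence adding a multiple of [b^n] to [j]
   does not change the first [2n] digits of [h j], and a suitable
   [d < b] makes the digit of index [2n] of [h (j + b^n d)] vanish;
   as [-1 < beta' < 0], appending [0] and then a digit [< b] can only
   lower the value, so [mu] is non-increasing.  For the second claim, the
   digits of index [>= 2n] contribute more than
   [beta'^(2n+1) (b-1) / (1 - beta'^2)], so a minimiser [k] of [mu m]
   satisfies every filter defining [J n] ([n <= m]) through its residue
   [k mod b^n]; thus [k] itself lies in [J (m-1) + b^(m-1) A]. *)

Section QuadraticInteger.
Variable R : realFieldType.
Variables (a b : nat) (beta : R).
Hypothesis beta_root : beta ^+ 2 = a%:R * beta + b%:R.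

Local Notation Zb := (inZbeta beta).

Lemma eq_by_beta_root (c X Y : R) :
  X - Y = c * (beta ^+ 2 - (a%:R * beta + b%:R)) -> X = Y.
Proof. by rewrite beta_root subrr mulr0 => /eqP; rewrite subr_eq0 => /eqP. Qed.

Lemma inZbeta_int (z : int) : Zb z%:~R.
Proof. by exists z, 0; rewrite mul0r addr0. Qed.

Lemma inZbeta_nat (n : nat) : Zb n%:R.
Proof. exact: inZbeta_int n. Qed.

Lemma inZbeta_beta : Zb beta.
Proof. by exists 0, 1; rewrite mul1r add0r. Qed.

Lemma inZbetaD x y : Zb x -> Zb y -> Zb (x + y).
Proof. by move=> [p [q ->]] [p' [q' ->]]; exists (p + p'), (q + q'); rewrite !intrD; ring. Qed.

Lemma inZbetaN x : Zb x -> Zb (- x).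
Proof. by move=> [p [q ->]]; exists (- p), (- q); rewrite !intrN; ring. Qed.

Lemma inZbetaB x y : Zb x -> Zb y -> Zb (x - y).
Proof. by move=> zx zy; apply/inZbetaD/inZbetaN. Qed.

Lemma inZbetaM x y : Zb x -> Zb y -> Zb (x * y).
Proof.
move=> [p [q ->]] [p' [q' ->]].
exists (p * p' + q * q' * b%:Z), (p * q' + q * p' + q * q' * a%:Z).
apply: (eq_by_beta_root (c := q%:~R * q'%:~R)); rewrite !intrD !intrM /=; ring.
Qed.

Lemma inZbetaX x n : Zb x -> Zb (x ^+ n).
Proof.
by move=> zx; elim: n => [|n IH]; [apply: inZbeta_nat 1 | rewrite exprS; apply: inZbetaM].
Qed.

Lemma one_add_beta_mulX t n : Zb t ->
  exists2 s, Zb s & (1 + beta * t) ^+ n = 1 + beta * s.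
Proof.
move=> zt; elim: n => [|n [s zs Es]].
  by exists 0; [apply: inZbeta_nat 0 | rewrite expr0 mulr0 addr0].
exists (s + t + beta * s * t); last by rewrite exprSr Es; ring.
by do 2?apply: inZbetaD => //; do 2?apply: inZbetaM => //; apply: inZbeta_beta.
Qed.

Hypothesis b_gt0 : (0 < b)%N.
Hypothesis b_le_a : (b <= a)%N.
Hypothesis beta_gt0 : 0 < beta.

Lemma beta_gt_a : a%:R < beta.
Proof.
have b_pos : 0 < b%:R :> R by rewrite ltr0n.
rewrite ltNge; apply/negP => beta_le_a.
have : 0 <= beta * (a%:R - beta) by apply: mulr_ge0; [exact: ltW | rewrite subr_ge0].
have -> : beta * (a%:R - beta) = - b%:R by rewrite mulrBr -expr2 beta_root; ring.
lra.
Qed.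

Lemma beta_lt_a1 : beta < a%:R + 1.
Proof.
have b_le : b%:R <= a%:R :> R by rewrite ler_nat.
rewrite ltNge; apply/negP => a1_le_beta.
have : 0 <= beta * (beta - (a%:R + 1)) by apply: mulr_ge0; [exact: ltW | rewrite subr_ge0].
have -> : beta * (beta - (a%:R + 1)) = b%:R - beta by rewrite mulrBr -expr2 beta_root; ring.
lra.
Qed.

(* Descent: if [s beta] is an integer then so is [s' beta] with
   [s' = s (beta - a)], and [0 < s' < s] since [a < beta < a + 1]. *)
Lemma beta_irrational (s : nat) (r : int) : (0 < s)%N -> s%:R * beta != r%:~R.
Proof.
elim/ltn_ind: s r => s IH r s_gt0; apply/negP => /eqP Er.
set s' := r - (a * s)%N%:Z.
have Es' : s'%:~R = s%:R * (beta - a%:R) :> R.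
  by rewrite intrD intrN -Er -[_%:~R]/((a * s)%N%:R) natrM; ring.
have s_pos : 0 < s%:R :> R by rewrite ltr0n.
have beta_gt := beta_gt_a; have beta_lt := beta_lt_a1.
have s'_gt0 : 0 < s' by rewrite -(ltr0z R) Es' mulr_gt0 // subr_gt0.
have s'_lt : s' < s%:Z.
  rewrite -(ltr_int R) Es' /=.
  suff : 0 < s%:R * (1 - (beta - a%:R)) :> R by lra.
  by rewrite mulr_gt0 //; lra.
have [t Et] : exists t : nat, s' = t by exists `|s'|%N; rewrite gez0_abs // ltW.
have t_lt_s : (t < s)%N by rewrite -ltz_nat -Et.
have t_gt0 : (0 < t)%N by rewrite -ltz_nat -Et.
apply: (negP (IH t t_lt_s (s%:Z * b%:Z) t_gt0)); apply/eqP.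
have -> : t%:R = s'%:~R :> R by rewrite Et.
rewrite Es' intrM /=.
by apply: (eq_by_beta_root (c := s%:R)); ring.
Qed.

Lemma int_beta_eq0 (r s : int) : r%:~R + s%:~R * beta = 0 -> s = 0 /\ r = 0.
Proof.
case: s => [[|n]|n] E.
- by split => //; apply/eqP; rewrite -(intr_eq0 R); move: E; rewrite mul0r addr0 => ->.
- exfalso; apply: (negP (beta_irrational (- r) (ltn0Sn n))); apply/eqP.
  by rewrite intrN; apply/eqP; rewrite -addr_eq0 addrC E.
- exfalso; apply: (negP (beta_irrational r (ltn0Sn n))); apply/eqP.
  by move: E; rewrite NegzE intrN mulNr => /eqP; rewrite subr_eq0 => /eqP <-.
Qed.

Lemma dvdz_beta_multiple (c : int) y : Zb y -> c%:~R = beta * y -> (b%:Z %| c)%Z.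
Proof.
move=> [p [q ->]] Ec; apply/dvdzP; exists q.
have : (c - q * b%:Z)%:~R + (- (p + q * a%:Z))%:~R * beta = 0 :> R.
  rewrite intrD !intrN intrD !intrM Ec /=.
  by apply: (eq_by_beta_root (c := q%:~R)); ring.
by case/int_beta_eq0 => _ /eqP; rewrite subr_eq0 => /eqP.
Qed.

Lemma beta_digit_inj (u v : nat) y : (u < b)%N -> (v < b)%N -> Zb y ->
  u%:R - v%:R = beta * y -> u = v.
Proof.
move=> u_lt v_lt zy E.
have /dvdzP [q Eq] : (b%:Z %| u%:Z - v%:Z)%Z.
  by apply: (dvdz_beta_multiple zy); rewrite intrD intrN.
rewrite -!ltz_nat in u_lt v_lt.
case: (ltrgtP q 0) => [q_lt0|q_gt0|q0]; last by move: Eq; rewrite q0 mul0r; lia.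
- have : b%:Z <= - q * b%:Z by rewrite ler_pMl //; lia.
  lia.
- have : b%:Z <= q * b%:Z by rewrite ler_pMl //; lia.
  lia.
Qed.

Lemma beta_neq0 : beta != 0.
Proof. by rewrite gt_eqF. Qed.

Lemma expansion_residue x u n y : is_beta_expansion b beta x u -> Zb y ->
  x - \sum_(i < n) (u i)%:R * beta ^+ i = beta ^+ n * y ->
  exists2 z, Zb z & y - (u n)%:R = beta * z.
Proof.
move=> [_ eu] zy Ey; have [z [zz Ez]] := eu n.+1.
exists z => //; apply: (mulfI (expf_neq0 n beta_neq0)).
by rewrite mulrA -exprSr -Ez big_ord_recr /= mulrBr -Ey; ring.
Qed.

Lemma expansion_digitE x u n y (c : nat) w : is_beta_expansion b beta x u ->
  Zb y -> x - \sum_(i < n) (u i)%:R * beta ^+ i = beta ^+ n * y ->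
  (c < b)%N -> Zb w -> y - c%:R = beta * w -> u n = c.
Proof.
move=> ex zy Ey c_lt zw Ew; have [z zz Ez] := expansion_residue ex zy Ey.
apply: (beta_digit_inj (ex.1 n) c_lt (inZbetaB zw zz)).
by rewrite mulrBr -Ew -Ez; ring.
Qed.

Lemma expansion_prefix_eq x x' u v N w : is_beta_expansion b beta x u ->
  is_beta_expansion b beta x' v -> Zb w -> x - x' = beta ^+ N * w ->
  forall i, (i < N)%N -> u i = v i.
Proof.
move=> ex ex' zw Ew.
suff eq_prefix n : (n <= N)%N -> forall i, (i < n)%N -> u i = v i by exact: eq_prefix.
elim: n => [//|n IH] n_lt i; rewrite ltnS leq_eqVlt => /orP [/eqP ->|];
  last exact: IH (ltnW n_lt) i.
have [y [zy Ey]] := ex.2 n.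
have [z zz Ez] := expansion_residue ex zy Ey.
have [t Nt] : exists t, N = (n.+1 + t)%N by exists (N - n.+1)%N; rewrite subnKC.
have Sn : \sum_(i < n) (v i)%:R * beta ^+ i = \sum_(i < n) (u i)%:R * beta ^+ i.
  by apply: eq_bigr => k _; rewrite IH // ltnW.
symmetry; apply: (expansion_digitE (y := y - beta ^+ t.+1 * w) (w := z - beta ^+ t * w) ex').
- by apply/inZbetaB/inZbetaM/zw/inZbetaX/inZbeta_beta.
- by rewrite Sn mulrBr -Ey mulrA -exprD addnS -addSn -Nt -Ew; ring.
- exact: ex.1.
- by apply/inZbetaB/inZbetaM/zw/inZbetaX/inZbeta_beta.
- by rewrite -[in LHS]addrA [- _ + _]addrC addrA Ez exprS; ring.
Qed.

Variable k : nat.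
Hypothesis a_eq : a = (k * b)%N.

(* From [beta (beta - a) = b] and [a = k b]: [beta - a = beta eps]. *)
Let eps : R := 1 - k%:R * (beta - a%:R).

Lemma inZbeta_eps : Zb eps.
Proof.
exists (1 + (k * a)%N%:Z), (- k%:Z).
by rewrite /eps intrD intrN -[((k * a)%N%:Z)%:~R]/((k * a)%N%:R) natrM; ring.
Qed.

Lemma beta_sub_a : beta - a%:R = beta * eps.
Proof. by apply: (eq_by_beta_root (c := k%:R)); rewrite /eps a_eq natrM; ring. Qed.

Lemma natr_b : b%:R = beta ^+ 2 * eps.
Proof. by rewrite expr2 -mulrA -beta_sub_a; apply: (eq_by_beta_root (c := -1)); ring. Qed.

Lemma natr_expb n : (b ^ n)%N%:R = beta ^+ (2 * n) * eps ^+ n.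
Proof. by rewrite natrX natr_b exprMn exprM. Qed.

Lemma eps_congr1 n : exists2 s, Zb s & eps ^+ n = 1 + beta * s.
Proof.
have -> : eps = 1 + beta * - (k%:R * eps) by rewrite {1}/eps beta_sub_a; ring.
by apply/one_add_beta_mulX/inZbetaN/inZbetaM/inZbeta_eps/inZbeta_nat.
Qed.

Variable h : int -> nat -> nat.
Hypothesis h_expansion : forall j : int, is_beta_expansion b beta j%:~R (h j).

Lemma h_prefix (j c : int) n i : (i < 2 * n)%N -> h (j + c * (b ^ n)%N%:Z) i = h j i.
Proof.
move=> i_lt; apply: (expansion_prefix_eq (h_expansion _) (h_expansion j) _ _ i_lt).
  exact: inZbetaM (inZbeta_int c) (inZbetaX n inZbeta_eps).
by rewrite intrD intrM -[((b ^ n)%N%:Z)%:~R]/((b ^ n)%N%:R) natr_expb; ring.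
Qed.

(* With [y = p + q beta] the [2 n]-th remainder of [j], take [d = -p mod b]:
   the remainder of [j + b^n d] is [y + eps^n d = p + d = 0] modulo [beta]. *)
Lemma h_zero_digit (j : int) n :
  exists2 d, (d < b)%N & h (j + (b ^ n * d)%N%:Z) (2 * n) = 0%N.
Proof.
have [y [[p [q Ey]] Ej]] := (h_expansion j).2 (2 * n)%N.
have b_neq0 : b%:Z != 0 by rewrite eqz_nat -lt0n.
set d := absz ((- p) %% b%:Z)%Z.
have Ed : d%:Z = ((- p) %% b%:Z)%Z by rewrite gez0_abs // modz_ge0.
have [m Em] : exists m : int, p + d%:Z = m * b%:Z.
  by exists (- ((- p) %/ b%:Z)%Z); rewrite Ed mulNr; have := divz_eq (- p) b%:Z; lia.
exists d; first by rewrite -ltz_nat Ed ltz_pmod // ltz_nat.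
have [s zs Es] := eps_congr1 n.
set j' := j + (b ^ n * d)%N%:Z.
have Sn : \sum_(i < 2 * n) (h j' i)%:R * beta ^+ i
        = \sum_(i < 2 * n) (h j i)%:R * beta ^+ i.
  by apply: eq_bigr => i _; rewrite /j' PoszM [_ * d%:Z]mulrC h_prefix.
apply: (expansion_digitE (h_expansion j') (y := y + eps ^+ n * d%:R)
          (w := m%:~R * beta * eps + q%:~R + s * d%:R)).
- have zy : Zb y by rewrite Ey; exists p, q.
  exact: inZbetaD zy (inZbetaM (inZbetaX n inZbeta_eps) (inZbeta_nat d)).
- rewrite Sn /j' intrD -[((_ * _)%N%:Z)%:~R]/((b ^ n * d)%N%:R) natrM natr_expb.
  by rewrite mulrDr -Ej; ring.
- exact: b_gt0.
- apply: inZbetaD (inZbetaM zs (inZbeta_nat d)).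
  apply: inZbetaD (inZbeta_int q).
  exact: inZbetaM (inZbetaM (inZbeta_int m) inZbeta_beta) inZbeta_eps.
- have Emr : p%:~R + d%:R = m%:~R * (beta ^+ 2 * eps) :> R.
    by rewrite -[d%:R]/(d%:Z%:~R) -intrD Em intrM -[(b%:Z)%:~R]/(b%:R) natr_b.
  rewrite Ey Es subr0.
  transitivity (p%:~R + d%:R + beta * (q%:~R + s * d%:R)); first by ring.
  by rewrite Emr; ring.
Qed.

End QuadraticInteger.

Lemma PprefS2 (R : realFieldType) (u : nat -> nat) n (y : R) :
  Ppref u n.+2 y = Ppref u n y + (u n)%:R * y ^+ n + (u n.+1)%:R * y ^+ n.+1.
Proof. by rewrite /Ppref !big_ord_recr. Qed.

Section EvenPrefixes.
Variables (R : realFieldType) (b : nat) (x : R).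
Hypotheses (x_gtN1 : -1 < x) (x_lt0 : x < 0).

Lemma expr_even_gt0 n : 0 < x ^+ (2 * n).
Proof. by rewrite exprn_even_gt0 ?oddM // ltr0_neq0 ?orbT. Qed.

Lemma expr_odd_lt0 n : x ^+ (2 * n).+1 < 0.
Proof. by rewrite exprn_odd_lt0 //= oddM. Qed.

Lemma one_sub_sqr_gt0 : 0 < 1 - x ^+ 2.
Proof.
have -> : 1 - x ^+ 2 = (1 - x) * (1 + x) by ring.
by apply: mulr_gt0; move: x_gtN1 x_lt0; lra.
Qed.

Lemma digit_pair_ge (v : nat -> nat) n : (v (2 * n).+1 < b)%N ->
  (b - 1)%N%:R * x ^+ (2 * n).+1
    <= (v (2 * n))%:R * x ^+ (2 * n) + (v (2 * n).+1)%:R * x ^+ (2 * n).+1.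
Proof.
move=> v_lt; rewrite -[X in X <= _]add0r lerD //.
  exact/mulr_ge0/ltW/expr_even_gt0.
by rewrite ler_wnM2r ?ler_nat //; [exact: ltW (expr_odd_lt0 _) | lia].
Qed.

Lemma Ppref_tail_ge (v : nat -> nat) m t : (forall i, (v i < b)%N) ->
  (b - 1)%N%:R * x ^+ (2 * m).+1 * (1 - x ^+ (2 * t))
    <= (Ppref v (2 * (m + t)) x - Ppref v (2 * m) x) * (1 - x ^+ 2).
Proof.
move=> v_lt; elim: t => [|t IH]; first by rewrite addn0 muln0 !subrr mulr0 mul0r.
rewrite addnS (mulnS 2 (m + t)) (mulnS 2 t) !add2n PprefS2.
have pair := digit_pair_ge (v_lt (2 * (m + t)).+1).
have XE : x ^+ (2 * (m + t)).+1 = x ^+ (2 * m).+1 * x ^+ (2 * t).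
  by rewrite mulnDr -addSn exprD.
have -> : x ^+ (2 * t).+2 = x ^+ (2 * t) * x ^+ 2 by rewrite -addn2 exprD.
set c := (b - 1)%N%:R in IH pair *; set D := 1 - x ^+ 2 in IH *.
set P := Ppref v _ x in IH *; set P0 := Ppref v (2 * m) x in IH *.
set Q := _ + _ in pair.
have pairD : c * x ^+ (2 * m).+1 * x ^+ (2 * t) * D <= Q * D.
  by apply: ler_wpM2r; [exact: ltW one_sub_sqr_gt0 | rewrite -mulrA -XE].
rewrite [X in X <= _](_ : _ = c * x ^+ (2 * m).+1 * (1 - x ^+ (2 * t))
  + c * x ^+ (2 * m).+1 * x ^+ (2 * t) * D); last by rewrite /D; ring.
rewrite [X in _ <= X](_ : _ = (P - P0) * D + Q * D); last by rewrite /Q; ring.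
exact: lerD IH pairD.
Qed.

Lemma Ppref_even_lt (v : nat -> nat) m t : (1 < b)%N -> (forall i, (v i < b)%N) ->
  Ppref v (2 * m) x
    < Ppref v (2 * (m + t)) x + `|x| ^+ (2 * m).+1 * (b - 1)%N%:R / (1 - x ^+ 2).
Proof.
move=> b_gt1 v_lt; have tail := Ppref_tail_ge m t v_lt.
have D_gt0 := one_sub_sqr_gt0; have X_lt0 := expr_odd_lt0 m.
have c_gt0 : 0 < (b - 1)%N%:R :> R by rewrite ltr0n subn_gt0.
have cXE_lt0 : (b - 1)%N%:R * x ^+ (2 * m).+1 * x ^+ (2 * t) < 0.
  by rewrite pmulr_llt0 ?expr_even_gt0 // pmulr_rlt0.
rewrite -normrX ltr0_norm // -subr_gt0.
set P := Ppref v (2 * (m + t)) x in tail *; set P0 := Ppref v (2 * m) x in tail *.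
set c := (b - 1)%N%:R in tail c_gt0 cXE_lt0 *; set X := x ^+ _ in tail X_lt0 cXE_lt0 *.
set D := 1 - x ^+ 2 in tail D_gt0 *.
have -> : P + - X * c / D - P0 = ((P - P0) * D - c * X) / D by field; rewrite gt_eqF.
by rewrite divr_gt0 //; lra.
Qed.

End EvenPrefixes.

Section SeqMin.
Variables (R : realFieldType) (f : int -> R).

Lemma seqmin_le s y : y \in s -> seqmin s f <= f y.
Proof.
rewrite /seqmin; move: (f _) => c.
elim: s => //= z s IH; rewrite in_cons => /orP [/eqP ->|y_s].
  by rewrite ge_min lexx.
by rewrite ge_min IH ?orbT.
Qed.

Lemma seqmin_mem s : s != [::] -> exists2 y, y \in s & seqmin s f = f y.
Proof.
case: s => // z s _; rewrite /seqmin /=.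
suff [y y_s ->] : exists2 y, y \in z :: s & foldr (fun j m => Num.min (f j) m) (f z) s = f y.
  by case: leP => _; [exists z; rewrite ?mem_head | exists y].
elim: s => [|w s [y y_s IH]] /=; first by exists z; rewrite ?mem_head.
case: leP => _; first by exists w => //; rewrite !inE eqxx orbT.
by exists y => //; move: y_s; rewrite !inE => /orP [] ->; rewrite ?orbT.
Qed.

End SeqMin.

Lemma modn_expnS (b k n : nat) :
  (k %% b ^ n.+1 = k %% b ^ n + b ^ n * (k %/ b ^ n %% b))%N.
Proof.
rewrite expnSr {1}(divn_eq (k %% (b ^ n * b)) (b ^ n)) modn_dvdm ?dvdn_mulr //.
by rewrite [(b ^ n * b)%N]mulnC -modn_divl addnC mulnC.
Qed.

Section Minima.
Variables (R : realFieldType) (b : nat) (h : int -> nat -> nat) (x : R).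
Hypotheses (b_gt1 : (1 < b)%N) (x_gtN1 : -1 < x) (x_lt0 : x < 0).
Hypothesis h_digit : forall j i, (h j i < b)%N.
Hypothesis h_prefix : forall (j c : int) n i,
  (i < 2 * n)%N -> h (j + c * (b ^ n)%N%:Z) i = h j i.
Hypothesis h_zero_digit : forall (j : int) n,
  exists2 d, (d < b)%N & h (j + (b ^ n * d)%N%:Z) (2 * n) = 0%N.

Local Notation mu := (mu b h x).
Local Notation J := (Jset b h x).
Local Notation P n := (fun j => Ppref (h j) (2 * n) x).

Lemma Ppref_shift (j c : int) n : P n (j + c * (b ^ n)%N%:Z) = P n j.
Proof. by apply: eq_bigr => i _; rewrite h_prefix. Qed.

Lemma Ppref_modn (k n : nat) : P n (k %% b ^ n)%N = P n k.
Proof. by rewrite /= [in RHS](divn_eq k (b ^ n)) PoszD addrC PoszM Ppref_shift. Qed.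

Lemma mu_le_Ppref n (k : nat) : (k < b ^ n)%N -> mu n <= P n k.
Proof. by move=> k_lt; apply/seqmin_le/map_f; rewrite mem_iota. Qed.

Lemma mu_attained n : exists2 k : nat, (k < b ^ n)%N & mu n = P n k.
Proof.
have : [seq k%:Z | k <- iota 0 (b ^ n)] != [::].
  by rewrite -size_eq0 size_map size_iota -lt0n expn_gt0 ltnW.
case/(seqmin_mem (P n)) => _ /mapP [k k_lt ->] Ek.
by exists k; move: k_lt; rewrite mem_iota.
Qed.

Lemma mu_succ_le n : mu n.+1 <= mu n.
Proof.
have [k k_lt ->] := mu_attained n.
have [d d_lt zero_d] := h_zero_digit k n.
have kd_lt : (k + b ^ n * d < b ^ n.+1)%N by rewrite expnSr; nia.
apply: le_trans (mu_le_Ppref kd_lt) _.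
rewrite /= mulnS add2n PprefS2 PoszD zero_d PoszM mulrC Ppref_shift mul0r addr0.
rewrite -[X in _ <= X]addr0 lerD2l mulr_ge0_le0 //.
exact/ltW/expr_odd_lt0.
Qed.

Lemma mu_le_leq m n : (m <= n)%N -> mu n <= mu m.
Proof.
elim: n => [|n IH]; first by rewrite leqn0 => /eqP ->.
rewrite leq_eqVlt => /orP [/eqP ->//|m_le_n].
exact: le_trans (mu_succ_le n) (IH m_le_n).
Qed.

Lemma mem_cands (I : seq int) n (k d : nat) : k%:Z \in I -> (d < b)%N ->
  (k + b ^ n * d)%N%:Z \in cands b I n.
Proof.
move=> k_I d_lt; rewrite PoszD.
by apply: (allpairs_f (fun j d => j + (b ^ n * d)%N%:Z)); rewrite // mem_iota.
Qed.

Lemma cands_bound (I : seq int) n y :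
  (forall z, z \in I -> exists2 k : nat, (k < b ^ n)%N & z = k) ->
  y \in cands b I n -> exists2 k : nat, (k < b ^ n.+1)%N & y = k.
Proof.
move=> I_bound /allpairsP [[j d] [/I_bound [k k_lt ->] /=]].
rewrite mem_iota add0n => /andP [_ d_lt] ->.
by exists (k + b ^ n * d)%N; rewrite ?PoszD // expnSr; nia.
Qed.

Lemma Jset_bound n y : y \in J n -> exists2 k : nat, (k < b ^ n)%N & y = k.
Proof.
elim: n y => [|n IH] y /=; first by rewrite inE => /eqP ->; exists 0%N.
by rewrite mem_filter => /andP [_]; apply: cands_bound.
Qed.

(* By the tail estimate, the prefix of length [2 n] of a minimiser of
   [mu m] lies below [mu m + threshold <= mu n + threshold]. *)
Lemma minimizer_modn_in_Jset (k m : nat) : mu m = P m k ->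
  forall n, (n <= m)%N -> (k %% b ^ n)%N%:Z \in J n.
Proof.
move=> Ek; elim=> [|n IH] n_le; first by rewrite expn0 modn1 inE.
rewrite /= mem_filter; apply/andP; split.
  rewrite Ppref_modn.
  apply: lt_le_trans (Ppref_even_lt x_gtN1 x_lt0 n.+1 (m - n.+1) b_gt1 (h_digit k)) _.
  by rewrite subnKC // -Ek lerD2r mu_le_leq.
rewrite modn_expnS; apply: mem_cands; first exact: IH (ltnW n_le).
by rewrite ltn_mod ltnW.
Qed.

Lemma mu_cands m : mu m.+1 = seqmin (cands b (J m) m) (P m.+1).
Proof.
have [k k_lt Ek] := mu_attained m.+1.
have k_mem : k%:Z \in cands b (J m) m.
  have -> : k = (k %% b ^ m + b ^ m * (k %/ b ^ m))%N by rewrite addnC mulnC -divn_eq.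
  apply: mem_cands; first exact: minimizer_modn_in_Jset Ek m (leqnSn m).
  by rewrite ltn_divLR -?expnS // expn_gt0 ltnW.
apply/eqP; rewrite eq_le; apply/andP; split; last by rewrite Ek seqmin_le.
have /(seqmin_mem (P m.+1)) [y y_mem ->] : cands b (J m) m != [::].
  by apply: contraTneq k_mem => ->.
by have [k' k'_lt ->] := cands_bound (@Jset_bound m) y_mem; apply: mu_le_Ppref.
Qed.

End Minima.

Theorem mainTheorem11 (R : realFieldType) (a b : nat) (beta : R)
  (h : int -> nat -> nat) :
  (2 <= b)%N -> (b <= a)%N -> (b %| a)%N ->
  1 < beta -> beta ^+ 2 = a%:R * beta + b%:R ->
  (forall j : int, is_beta_expansion b beta j%:~R (h j)) ->
  let beta' := a%:R - beta in
  (forall n : nat, (1 <= n)%N -> mu b h beta' n.+1 <= mu b h beta' n) /\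
  (forall n : nat, (1 <= n)%N ->
     mu b h beta' n =
     seqmin (cands b (Jset b h beta' n.-1) n.-1)
            (fun j => Ppref (h j) (2 * n)%N beta')).
Proof.
move=> b_gt1 b_le_a b_dvd_a beta_gt1 beta_root h_exp beta'.
have b_gt0 := ltnW b_gt1.
have beta_gt0 := lt_trans ltr01 beta_gt1.
have beta'_lt0 : beta' < 0 by rewrite subr_lt0 (beta_gt_a beta_root).
have beta'_gtN1 : -1 < beta'.
  by have := beta_lt_a1 beta_root b_le_a beta_gt0; rewrite /beta'; lra.
have a_eq : a = (a %/ b * b)%N by rewrite divnK.
have h_digit j i : (h j i < b)%N := (h_exp j).1 i.
have prefix := h_prefix beta_root b_gt0 b_le_a beta_gt0 a_eq h_exp.
have zero_digit := h_zero_digit beta_root b_gt0 b_le_a beta_gt0 a_eq h_exp.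
split=> [n _ | [|n] // _]; first exact: mu_succ_le.
exact: mu_cands.
Qed.
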